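(* Let $\kappa\ge2$ be an integer, $\Delta>0$ and $a\in\mathbb R$. Then \[\sum_{m=-\infty}^{\infty}\frac1{((m+a)^2+\Delta^2)^{\kappa/2}}\le\frac{\kappa+\Delta}{\Delta}\int_{\mathbb R}\frac{dx}{(x^2+\Delta^2)^{\kappa/2}}.\] *)

From HB Require Import structures.
From mathcomp Require Import all_boot all_order all_algebra.
From mathcomp Require Import all_classical all_reals all_analysis.
Set Implicit Arguments. Unset Strict Implicit. Unset Printing Implicit Defensive.

From HB Require Import structures.
From mathcomp Require Import all_boot all_order all_algebra.
From mathcomp Require Import all_classical all_reals all_analysis.
From mathcomp Require Import ring lra zify measurable_realfun.
Import Order.TTheory GRing.Theory Num.Theory.
Local Open Scope classical_set_scope.
Local Open Scope ring_scope.

(* A function f >= 0 that is nonincreasing in |x| is unimodal along every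
   shifted lattice k + b.  Such a sum exceeds the sum of the minima of
   consecutive terms by at most its maximum, at most f 0, and each such
   minimum is bounded by the integral of f over the unit interval between
   the two points; hence sum_m f (m + a) <= f 0 + int f.  For
   f x = (x^2 + Delta^2)^(-kappa/2), Bernoulli's inequality gives
   f >= f 0 / 2 on [-Delta/kappa, Delta/kappa], so f 0 <= (kappa/Delta) int f. *)

Lemma unimodal_sum_le {R : realDomainType} (c : nat -> R) (M : R) :
  (forall k, c k < c k.+1 -> forall j, (j <= k)%N -> c j <= c k) ->
  (forall k, c k <= M) ->
  forall n, \sum_(k < n.+1) c k <= M + \sum_(k < n) Num.min (c k) (c k.+1).
Proof.
move=> c_unimodal c_le_M n.
pose excess n := \sum_(k < n.+1) c k - \sum_(k < n) Num.min (c k) (c k.+1).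
suff [] : excess n <= M /\
    ((forall j, (j <= n)%N -> c j <= c n) -> excess n <= c n).
  by rewrite /excess; lra.
elim: n => [|n [IH_M IH_incr]].
  by rewrite /excess big_ord_recr !big_ord0 /=; split=> [|_]; [have := c_le_M 0%N|]; lra.
rewrite /excess in IH_M IH_incr *.
rewrite [X in X - _]big_ord_recr [X in _ - X]big_ord_recr /=.
have [c_le|c_lt] := leP (c n.+1) (c n); last first.
  by have := IH_incr (c_unimodal _ c_lt); have := c_le_M n.+1; split; lra.
split; first lra.
move=> c_incr; have c_eq : c n = c n.+1 by apply/le_anti; rewrite c_le c_incr.
suff : excess n <= c n by rewrite /excess; lra.
by apply: IH_incr => j jn; rewrite c_eq; exact: c_incr (leqW jn).
Qed.

Section IntegralBounds.
Context {R : realType}.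
Notation mu := (@lebesgue_measure R).

Lemma cst_le_integral_itv (f : R -> R) (u v c : R) :
  u < v -> 0 <= c -> measurable_fun setT f ->
  (forall x, u <= x < v -> c <= f x) ->
  ((c * (v - u))%:E <= \int[mu]_(x in `[u, v[) (f x)%:E)%E.
Proof.
move=> uv c0 mf cf.
have mI : measurable (`[u, v[ : set R) by [].
have -> : (c * (v - u))%:E = (\int[mu]_(x in `[u, v[) cst c%:E x)%E.
  rewrite integral_cst // [X in (_ * X)%E](_ : _ = (v - u)%:E) //.
  by apply: eq_trans (lebesgue_measure_itv `[u, v[) _; rewrite /= lte_fin uv -EFinD.
apply: ge0_le_integral => //.
by apply/measurable_EFinP; exact: measurable_funTS.
Qed.

Lemma sum_integral_unit_itv_le (f : R -> R) (b : R) (n : nat) :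
  (forall x, 0 <= f x) -> measurable_fun setT f ->
  (\sum_(k < n) \int[mu]_(x in `[(k%:R + b)%R, (k%:R + b + 1)%R[) (f x)%:E
   <= \int[mu]_(x in [set: R]) (f x)%:E)%E.
Proof.
move=> f0 mf.
rewrite -(big_mkord xpredT
  (fun k => \int[mu]_(x in `[(k%:R + b)%R, (k%:R + b + 1)%R[) (f x)%:E)%E).
rewrite -ge0_integral_bigsetU //.
- apply: ge0_subset_integral => //; first exact: bigsetU_measurable.
    by apply/measurable_EFinP.
  by move=> x _; rewrite lee_fin.
- exact: iota_uniq.
- move=> i j _ _ [x [/=]]; rewrite !in_itv /= => /andP[? ?] /andP[? ?].
  by apply/eqP; rewrite eqn_leq; apply/andP; split;
    rewrite -ltnS -(ltr_nat R) -natr1; lra.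
- by apply/measurable_EFinP; exact: measurable_funTS.
- by move=> x _; rewrite lee_fin.
Qed.

End IntegralBounds.

Section RadiallyNonincreasing.
Context {R : realType}.
Variable f : R -> R.
Hypothesis f_ge0 : forall x, 0 <= f x.
Hypothesis measurable_f : measurable_fun setT f.
Hypothesis f_radial : forall x y, `|x| <= `|y| -> f y <= f x.
Notation mu := (@lebesgue_measure R).

Lemma min_le_integral_unit_itv (t : R) :
  ((Num.min (f t) (f (t + 1)))%:E <= \int[mu]_(x in `[t, (t + 1)%R[) (f x)%:E)%E.
Proof.
rewrite -[X in (X%:E <= _)%E]mulr1 -[X in _ * X](addrK t) [_ + t]addrC.
apply: cst_le_integral_itv => //; rewrite ?ltrDl ?le_min ?f_ge0 //.
move=> x /andP[tx xt]; rewrite ge_min; apply/orP.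
have [x0|x0] := leP 0 x; [right|left]; apply: f_radial.
  by rewrite !ger0_norm //; lra.
by rewrite !ltr0_norm //; lra.
Qed.

Lemma shift_unimodal (b : R) (k : nat) :
  f (k.+1%:R + b) > f (k%:R + b) ->
  forall j, (j <= k)%N -> f (j%:R + b) <= f (k%:R + b).
Proof.
rewrite -natr1 => f_lt j jk.
have k_neg : k%:R + b < 0.
  rewrite ltNge; apply/negP => k_nneg.
  have := @f_radial (k%:R + b) (k%:R + 1 + b).
  by rewrite !ger0_norm; lra.
have : (j%:R <= k%:R :> R) by rewrite ler_nat.
by move=> jk'; apply: f_radial; rewrite (ltr0_norm k_neg) ler0_norm; lra.
Qed.

Lemma sum_shift_nat_le (b : R) (n : nat) :
  ((\sum_(k < n.+1) f (k%:R + b))%:E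
   <= (f 0)%:E + \int[mu]_(x in [set: R]) (f x)%:E)%E.
Proof.
pose c k := f (k%:R + b).
have c_le_f0 k : c k <= f 0 by apply: f_radial; rewrite normr0.
apply: (@le_trans _ _ (f 0 + \sum_(k < n) Num.min (c k) (c k.+1))%:E).
  by rewrite lee_fin; apply: unimodal_sum_le => // k; exact: shift_unimodal.
rewrite EFinD leeD2l // -sumEFin.
apply: le_trans _ (sum_integral_unit_itv_le f b n f_ge0 measurable_f).
apply: lee_sum => k _; rewrite /c -natr1 addrAC.
exact: min_le_integral_unit_itv.
Qed.

Lemma esum_shift_int_le (a : R) :
  (\esum_(m in [set: int]) (f (m%:~R + a))%:E
   <= (f 0)%:E + \int[mu]_(x in [set: R]) (f x)%:E)%E.
Proof.
apply: ge_ereal_sup => _ [A [finA _] <-].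
pose N := (\max_(x <- finmap.enum_fset (fset_set A)) absz x)%N.
have AN x : A x -> (absz x <= N)%N.
  by move=> Ax; apply: leq_bigmax_seq => //; rewrite in_fset_set // inE.
pose shift (k : nat) : int := k%:Z - N%:Z.
have A_sub : {subset A <= shift @` `I_(N + N).+1}.
  move=> x; rewrite !inE => Ax; have := AN x Ax.
  by exists (absz (x + N%:Z)); rewrite /= /shift; lia.
apply: le_trans (lee_fsum_nneg_subset finA _ A_sub _) _.
- by apply: finite_image; exact: finite_II.
- by move=> t _; rewrite lee_fin.
rewrite fsbig_image; last by move=> k k' _ _; rewrite /shift; lia.
rewrite -fsbig_ord sumEFin.
have shiftE k : (shift k)%:~R + a = k%:R + (a - N%:R) :> R.
  by rewrite /shift intrD mulrNz; lra.
under eq_bigr do rewrite shiftE.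
exact: sum_shift_nat_le.
Qed.

End RadiallyNonincreasing.

Lemma expr_1D_le {R : realFieldType} (u : R) (n : nat) :
  0 <= u -> 2 * n%:R * u <= 1 -> (1 + u) ^+ n <= 1 + 2 * n%:R * u.
Proof.
move=> u0; elim: n => [|n IH]; first by rewrite expr0 mulr0 mul0r addr0.
rewrite -natr1 exprSr => nu.
have IHn : (1 + u) ^+ n <= 1 + 2 * n%:R * u by apply: IH; nra.
have : 0 <= (1 + u) ^+ n by apply: exprn_ge0; lra.
have : 0 <= n%:R :> R by [].
nra.
Qed.

Section Weight.
Context {R : realType}.
Variables (kappa : nat) (Delta : R).
Hypothesis kappa_ge2 : (2 <= kappa)%N.
Hypothesis Delta_gt0 : 0 < Delta.
Notation mu := (@lebesgue_measure R).

Definition weight (x : R) : R := ((x ^+ 2 + Delta ^+ 2) `^ (kappa%:R / 2))^-1.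

Let kappa_ge2R : 2 <= kappa%:R :> R.
Proof. by rewrite (ler_nat R 2). Qed.

Let base_gt0 (x : R) : 0 < x ^+ 2 + Delta ^+ 2.
Proof. by rewrite ltr_pwDr ?sqr_ge0 ?exprn_gt0. Qed.

Lemma weight_ge0 (x : R) : 0 <= weight x.
Proof. by rewrite invr_ge0 powR_ge0. Qed.

Lemma measurable_weight : measurable_fun setT weight.
Proof.
rewrite (_ : weight = fun x => (x ^+ 2 + Delta ^+ 2) `^ (- (kappa%:R / 2))).
  apply: measurableT_comp (measurable_powR _) _.
  by apply: measurable_funD => //; exact: measurable_funX.
by apply: funext => x; rewrite powRN.
Qed.

Lemma weight_radial (x y : R) : `|x| <= `|y| -> weight y <= weight x.
Proof.
move=> xy; rewrite /weight lef_pV2 ?posrE ?powR_gt0 //.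
apply: ge0_ler_powR; rewrite ?nnegrE ?divr_ge0 ?(ltW (base_gt0 _)) //.
rewrite lerD2r -(real_normK (num_real x)) -(real_normK (num_real y)).
by rewrite ler_sqr ?nnegrE ?normr_ge0.
Qed.

Lemma powR_1D_le2 (u : R) :
  0 <= u -> u * kappa%:R ^+ 2 <= 1 -> (1 + u) `^ (kappa%:R / 2) <= 2.
Proof.
move=> u0 u_small; have k2 := kappa_ge2R.
(* kappa u <= 1 / kappa <= 1 / 2, so Bernoulli applies with room to spare *)
have ku : 2 * kappa%:R * u <= 1.
  have : 0 <= kappa%:R * u by rewrite mulr_ge0.
  nra.
apply: (@le_trans _ _ ((1 + u) `^ kappa%:R)).
  by apply: ler_powR; lra.
rewrite powR_mulrn; last lra.
apply: le_trans (expr_1D_le u kappa u0 ku) _; lra.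
Qed.

Lemma weight_ge_half (x : R) :
  `|x| <= Delta / kappa%:R -> weight 0 / 2 <= weight x.
Proof.
move=> x_small.
have D2_gt0 : 0 < Delta ^+ 2 by exact: exprn_gt0.
pose u := x ^+ 2 / Delta ^+ 2.
have u0 : 0 <= u by rewrite divr_ge0 // sqr_ge0.
have u_small : u * kappa%:R ^+ 2 <= 1.
  have xk : `|x| * kappa%:R <= Delta by rewrite -ler_pdivlMr // ltr0n; lia.
  have xn : x ^+ 2 = `|x| ^+ 2 by rewrite real_normK ?num_real.
  rewrite /u mulrAC ler_pdivrMr // mul1r xn.
  have := mulr_ge0 (normr_ge0 x) (ler0n R kappa); nra.
have baseE : x ^+ 2 + Delta ^+ 2 = (1 + u) * Delta ^+ 2.
  by rewrite /u; field; rewrite gt_eqF.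
rewrite /weight /= (expr2 0) mul0r add0r -invfM lef_pV2 ?posrE ?mulr_gt0 ?powR_gt0 //.
rewrite baseE powRM ?(ltW D2_gt0) //; last lra.
rewrite [X in _ <= X]mulrC.
by apply: ler_wpM2r; [exact: powR_ge0 | exact: powR_1D_le2].
Qed.

Lemma weight0_le_integral :
  ((weight 0)%:E <= (kappa%:R / Delta)%:E * \int[mu]_(x in [set: R]) (weight x)%:E)%E.
Proof.
have k2 := kappa_ge2R; pose eps := Delta / kappa%:R.
have eps_gt0 : 0 < eps by rewrite divr_gt0 //; lra.
have -> : weight 0 = kappa%:R / Delta * (weight 0 / 2 * (eps - - eps)).
  by rewrite /eps; field; rewrite !gt_eqF //; lra.
rewrite EFinM lee_pmul2l ?lte_fin ?divr_gt0 //; last lra.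
apply: le_trans _ (@ge0_subset_integral _ _ _ mu `[- eps, eps[ setT _ _ _ _ _ _) => //.
- apply: cst_le_integral_itv; rewrite ?divr_ge0 ?weight_ge0 //; first lra.
    exact: measurable_weight.
  move=> x /andP[? ?]; apply: weight_ge_half.
  by rewrite -/eps ler_norml; apply/andP; split; lra.
- by apply/measurable_EFinP; exact: measurable_weight.
- by move=> x _; rewrite lee_fin weight_ge0.
Qed.

End Weight.

Theorem lemmaB2 (R : realType) (kappa : nat) (Delta a : R)
  (hk : (2 <= kappa)%N) (hD : 0 < Delta) :
  (\esum_(m in [set: int])
      ((((m%:~R + a) ^+ 2 + Delta ^+ 2) `^ (kappa%:R / 2))^-1)%:E
   <= ((kappa%:R + Delta) / Delta)%:E *
      \int[@lebesgue_measure R]_(x in [set: R])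
        (((x ^+ 2 + Delta ^+ 2) `^ (kappa%:R / 2))^-1)%:E)%E.
Proof.
have sum_le := esum_shift_int_le (weight kappa Delta) (weight_ge0 kappa Delta)
  (measurable_weight kappa Delta) (weight_radial kappa Delta hD) a.
apply: le_trans sum_le _.
set I := integral _ _ _.
have I_ge0 : (0 <= I)%E by apply: integral_ge0 => x _; rewrite lee_fin weight_ge0.
have -> : (kappa%:R + Delta) / Delta = kappa%:R / Delta + 1 by field; lra.
rewrite EFinD ge0_muleDl ?lee_fin ?divr_ge0 ?ler0n ?(ltW hD) // mul1e leeD2r //.
exact: weight0_le_integral.
Qed.
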